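(* For every Molholes term $t$ and every list of resources $l=[l_0,\dots,l_{|l|-1}]$ (with types making the terms well-typed), \[\mathsf{First}\,(\mathit{seq}^{G}_{l}(l,t))\equiv\mathit{seq}^{G}_{l}(l,\mathit{perm}_l(|l|,\mathsf{First}\,t)),\qquad \mathsf{First}\,(\mathit{seq}^{S}_{r}(l,t))\equiv\mathit{seq}^{S}_{r}(l,\mathit{perm}_r(|l|,\mathsf{First}\,t)).\]
   Context: Host types are sets with products; $\mathit{perm}=\lambda((x,y),z).((x,z),y)$. Molholes terms: $\mathsf{Arr}\,f:\mathsf{RSF}\,A\,B$, $\mathsf{Comp}\,t_1\,t_2$ (written $t_1\ggg t_2$, left-associative unless parenthesised), $\mathsf{First}\,t:\mathsf{RSF}(A\times C)(B\times C)$, $\mathsf{Get}\,r:\mathsf{RSF}\,A(A\times B)$, $\mathsf{Set}\,r:\mathsf{RSF}(A\times B)A$ ($r=\mathsf{Ref}\,B\,n$ a resource). Notations: $\mathit{stack}(n,t)=\mathsf{First}(\cdots(\mathsf{First}\,t)\cdots)$ with $n$ applications of $\mathsf{First}$; $\mathit{perm}_l(n,t)=\mathit{stack}(n-1,\mathsf{Arr}\,\mathit{perm})\ggg\cdots\ggg\mathit{stack}(0,\mathsf{Arr}\,\mathit{perm})\ggg t$; $\mathit{perm}_r(n,t)=t\ggg\mathit{stack}(0,\mathsf{Arr}\,\mathit{perm})\ggg\cdots\ggg\mathit{stack}(n-1,\mathsf{Arr}\,\mathit{perm})$; $\mathit{seq}^G_l(l,t)=\mathsf{Get}\,l_0\ggg(\cdots\ggg(\mathsf{Get}\,l_{|l|-1}\ggg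 t)\cdots)$; $\mathit{seq}^S_r(l,t)=t\ggg\mathsf{Set}\,l_{|l|-1}\ggg\cdots\ggg\mathsf{Set}\,l_0$. Semantics: a memory is a partial map from $\mathbb N$ to cells $\mathsf{Cell}(s,\tau)\,x$ ($s\in\{\mathsf{Internal},\mathsf{Input}\,b,\mathsf{Output}\,b\}$, $x$ a value of $\tau$ or $\mathsf{undef}$). For $r=\mathsf{Ref}\,A\,n$: $\mathrm{read}\,r\,\sigma=(x,\sigma)$ if $\sigma n=\mathsf{Cell}(\mathsf{Internal},A)x$; $=(x,\sigma[n\mapsto\mathsf{Cell}(\mathsf{Input}\,\mathrm{false},A)\mathsf{undef}])$ if $\sigma n=\mathsf{Cell}(\mathsf{Input}\,\mathrm{true},A)x$; else undefined. $\mathrm{write}\,r\,\sigma\,v=\sigma[n\mapsto\mathsf{Cell}(\mathsf{Internal},A)v]$ if $\sigma n=\mathsf{Cell}(\mathsf{Internal},A)x$; $=\sigma[n\mapsto\mathsf{Cell}(\mathsf{Output}\,\mathrm{false},A)v]$ if $\sigma n=\mathsf{Cell}(\mathsf{Output}\,\mathrm{true},A)\mathsf{undef}$; else undefined. $\mathrm{step}\,t:A\to(\text{memory}\rightharpoonup B\times\text{memory})$: $\mathsf{Arr}\,f\mapsto\lambda x\sigma.(fx,\sigma)$; $\mathsf{Comp}\,t_1t_2\mapsto\lambda x\sigma.\mathrm{step}\,t_2\,y\,\sigma'$ with $(y,\sigma')=\mathrm{step}\,t_1\,x\,\sigma$; $\mathsf{First}\,t\mapsto\lambda(x,c)\sigma.((y,c),\sigma')$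 with $(y,\sigma')=\mathrm{step}\,t\,x\,\sigma$; $\mathsf{Get}\,r\mapsto\lambda x\sigma.((x,y),\sigma')$ with $(y,\sigma')=\mathrm{read}\,r\,\sigma$; $\mathsf{Set}\,r\mapsto\lambda(x,y)\sigma.(x,\mathrm{write}\,r\,\sigma\,y)$ (all partial). $t\equiv t'$ iff $\mathrm{step}\,t=\mathrm{step}\,t'$ as partial functions. *)

From Stdlib Require Import List Bool Arith.
Import ListNotations.
Set Implicit Arguments.

Definition perm {X Y Z : Type} (p : (X * Y) * Z) : (X * Z) * Y :=
  let '((x, y), z) := p in ((x, z), y).

Inductive ref (B : Type) : Type := Ref : nat -> ref B.
Arguments Ref {B} _.
Definition addr {B} (r : ref B) : nat := let 'Ref n := r in n.

Inductive rsf : Type -> Type -> Type :=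
| Arr  : forall A B, (A -> B) -> rsf A B
| Comp : forall A B C, rsf A B -> rsf B C -> rsf A C
| First : forall A B C, rsf A B -> rsf (A * C) (B * C)
| Get  : forall A B, ref B -> rsf A (A * B)
| RSet : forall A B, ref B -> rsf (A * B) A.
Arguments Arr {A B} _.
Arguments Comp {A B C} _ _.
Arguments First {A B C} _.
Arguments Get {A B} _.
Arguments RSet {A B} _.

(* Memories: partial maps from nat to cells; undef is [None]. *)
Inductive status := Internal | Input (b : bool) | Output (b : bool).
Record cell := Cell { cstatus : status; cty : Type; cval : option cty }.
Arguments Cell : clear implicits.
Definition mem := nat -> option cell.
Definition upd (s : mem) (n : nat) (c : cell) : mem :=
  fun m => if Nat.eqb m n then Some c else s m.

(* read r s = (x, s') as a relation (read is a partial function). *)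
Inductive read {A : Type} (r : ref A) (s : mem) : A -> mem -> Prop :=
| read_internal : forall x,
    s (addr r) = Some (Cell Internal A (Some x)) -> read r s x s
| read_input : forall x,
    s (addr r) = Some (Cell (Input true) A (Some x)) ->
    read r s x (upd s (addr r) (Cell (Input false) A None)).

(* write r s v = s' as a relation (write is a partial function). *)
Inductive write {A : Type} (r : ref A) (s : mem) (v : A) : mem -> Prop :=
| write_internal : forall x,
    s (addr r) = Some (Cell Internal A x) ->
    write r s v (upd s (addr r) (Cell Internal A (Some v)))
| write_output :
    s (addr r) = Some (Cell (Output true) A None) ->
    write r s v (upd s (addr r) (Cell (Output false) A (Some v))).

(* The graph of the partial function step t : A -> mem -> B * mem. *)
Inductive step : forall A B, rsf A B -> A -> mem -> B -> mem -> Prop :=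
| step_arr : forall A B (f : A -> B) x s, step (Arr f) x s (f x) s
| step_comp : forall A B C (t1 : rsf A B) (t2 : rsf B C) x s y s1 z s2,
    step t1 x s y s1 -> step t2 y s1 z s2 -> step (Comp t1 t2) x s z s2
| step_first : forall A B C (t : rsf A B) x (c : C) s y s1,
    step t x s y s1 -> step (First t) (x, c) s (y, c) s1
| step_get : forall A B (r : ref B) (x : A) s y s1,
    read r s y s1 -> step (Get r) x s (x, y) s1
| step_set : forall A B (r : ref B) (x : A) (y : B) s s1,
    write r s y s1 -> step (RSet r) (x, y) s x s1.

Definition rsf_equiv {A B} (t t' : rsf A B) : Prop :=
  forall x s y s', step t x s y s' <-> step t' x s y s'.
Notation "t ≡ t'" := (rsf_equiv t t') (at level 70).

Definition res := {B : Type & ref B}.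
Definition tys (l : list res) : list Type := map (@projT1 Type ref) l.

(* prodR X [D_k; ...; D_1] = ((X * D_1) * ...) * D_k  (head = outermost). *)
Fixpoint prodR (X : Type) (Ds : list Type) : Type :=
  match Ds with [] => X | D :: Ds' => prodR X Ds' * D end.

(* seq^G_l(l,t) = Get l_0 >>> (... >>> (Get l_{|l|-1} >>> t)),
   computed on the reversed list (head = last resource). *)
Fixpoint seqG_rev {X Y : Type} (rs : list res) :
    rsf (prodR X (tys rs)) Y -> rsf X Y :=
  match rs as rs0 return rsf (prodR X (tys rs0)) Y -> rsf X Y with
  | [] => fun t => t
  | r :: rs' => fun t => seqG_rev rs' (Comp (Get (projT2 r)) t)
  end.
Definition seqG_l {X Y : Type} (l : list res)
  (t : rsf (prodR X (tys (rev l))) Y) : rsf X Y := seqG_rev (rev l) t.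

(* seq^S_r(l,t) = ((t >>> Set l_{|l|-1}) >>> ...) >>> Set l_0. *)
Fixpoint seqS_rev {X Y : Type} (rs : list res) :
    rsf X (prodR Y (tys rs)) -> rsf X Y :=
  match rs as rs0 return rsf X (prodR Y (tys rs0)) -> rsf X Y with
  | [] => fun t => t
  | r :: rs' => fun t => seqS_rev rs' (Comp t (RSet (projT2 r)))
  end.
Definition seqS_r {X Y : Type} (l : list res)
  (t : rsf X (prodR Y (tys (rev l)))) : rsf X Y := seqS_rev (rev l) t.

Fixpoint stack {X Y : Type} (Ds : list Type) (t : rsf X Y) :
    rsf (prodR X Ds) (prodR Y Ds) :=
  match Ds as Ds0 return rsf (prodR X Ds0) (prodR Y Ds0) with
  | [] => t
  | D :: Ds' => First (stack Ds' t)
  end.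

(* Left-associated chain
     (stack(n-1,Arr perm) >>> ... ) >>> stack(0,Arr perm)   (n = 1 + |Ds|)
   where every element is additionally wrapped by [w] (the wrapper
   accumulates the First's of the outer layers). *)
Fixpoint permL_chain (A C : Type) (F : Type -> Type)
    (w : forall X Y, rsf X Y -> rsf (F X) (F Y)) (D : Type) (Ds : list Type) :
    rsf (F (prodR (A * C) (D :: Ds))) (F (prodR A (D :: Ds) * C)%type) :=
  match Ds as Ds0
    return rsf (F (prodR (A * C) (D :: Ds0))) (F (prodR A (D :: Ds0) * C)%type) with
  | [] => w _ _ (Arr perm)
  | D' :: Ds' =>
      Comp (permL_chain A C (fun Z => F (Z * D)%type) (fun X Y f => w _ _ (First f)) D' Ds')
           (w _ _ (Arr perm))
  end.

(* perm_l(|Ds|, t) = stack(n-1,Arr perm) >>> ... >>> stack(0,Arr perm) >>> t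
   (left-associated; equal to t when n = 0). *)
Definition perm_l {A C Y : Type} (Ds : list Type) :
    rsf (prodR A Ds * C) Y -> rsf (prodR (A * C) Ds) Y :=
  match Ds as Ds0 return rsf (prodR A Ds0 * C) Y -> rsf (prodR (A * C) Ds0) Y with
  | [] => fun t => t
  | D :: Ds' => fun t => Comp (permL_chain A C (fun Z => Z) (fun X Y f => f) D Ds') t
  end.

(* perm_r(|Ds|, t) = t >>> stack(0,Arr perm) >>> ... >>> stack(n-1,Arr perm)
   (left-associated), with accumulator and wrapper. *)
Fixpoint perm_r_aux {X B C : Type} (F : Type -> Type)
    (w : forall X Y, rsf X Y -> rsf (F X) (F Y)) (Ds : list Type) :
    rsf X (F (prodR B Ds * C)%type) -> rsf X (F (prodR (B * C) Ds)) :=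
  match Ds as Ds0 return rsf X (F (prodR B Ds0 * C)%type) -> rsf X (F (prodR (B * C) Ds0)) with
  | [] => fun acc => acc
  | D :: Ds' => fun acc =>
      perm_r_aux (fun Z => F (Z * D)%type) (fun X Y f => w _ _ (First f)) Ds'
                 (Comp acc (w _ _ (Arr perm)))
  end.
Definition perm_r {X B C : Type} (Ds : list Type) (t : rsf X (prodR B Ds * C)) :
    rsf X (prodR (B * C) Ds) := perm_r_aux (fun Z => Z) (fun X Y f => f) Ds t.

From Stdlib Require Import List Setoid Morphisms.
Import ListNotations.

(* [First] applied to a Get-prefix (Set-suffix) is rewritten by equational laws of the
   arrow calculus into the same prefix (suffix) around [First t], preceded (followed) by
   one pure function moving the extra component C between the outside of the nested
   tuple and its innermost pair; the key laws are [First (Get r) ≡ Get r >>> Arr perm],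
   [First (Set r) ≡ Arr perm >>> Set r], and Get/Set commuting with pure functions.
   perm_l and perm_r compute exactly these pure functions, as stacks of [Arr perm]. *)

(* A structurally recursive copy of [step]: unlike the type-indexed inductive, it can be
   unfolded on a term without dependent inversion. *)
Fixpoint sem {A B} (t : rsf A B) : A -> mem -> B -> mem -> Prop :=
  match t in rsf A B return A -> mem -> B -> mem -> Prop with
  | Arr f => fun x s y s' => y = f x /\ s' = s
  | Comp t1 t2 => fun x s z s' => exists y s1, sem t1 x s y s1 /\ sem t2 y s1 z s'
  | First t => fun p s q s' => exists y, sem t (fst p) s y s' /\ q = (y, snd p)
  | Get r => fun x s q s' => fst q = x /\ read r s (snd q) s'
  | RSet r => fun p s y s' => y = fst p /\ write r s (snd p) s'
  end.

Lemma step_sem A B (t : rsf A B) x s y s' : step t x s y s' <-> sem t x s y s'.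
Proof.
  split.
  - induction 1; cbn; eauto.
  - revert x s y s'; induction t; cbn.
    + intros x s y s' [-> ->]; constructor.
    + intros x s z s' (y & s1 & H1 & H2); econstructor; eauto.
    + intros [x c] s q s' (y & H & ->); constructor; auto.
    + intros x s [x' y] s' [Hx H]; cbn in *; subst; constructor; auto.
    + intros [x y'] s y s' [Hx H]; cbn in *; subst; constructor; auto.
Qed.

Lemma rsf_equiv_sem A B (t t' : rsf A B) :
  t ≡ t' <-> forall x s y s', sem t x s y s' <-> sem t' x s y s'.
Proof. unfold rsf_equiv; setoid_rewrite step_sem; reflexivity. Qed.

Ltac by_sem := apply rsf_equiv_sem; intros ? ? ? ?; cbn.

Add Parametric Relation A B : (rsf A B) (@rsf_equiv A B)
  reflexivity proved by (fun t x s y s' => iff_refl _)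
  symmetry proved by (fun t t' H x s y s' => iff_sym (H x s y s'))
  transitivity proved by (fun t t' t'' H H' x s y s' => iff_trans (H x s y s') (H' x s y s'))
  as rsf_equiv_rel.

Add Parametric Morphism A B C : (@Comp A B C)
  with signature rsf_equiv ==> rsf_equiv ==> rsf_equiv as Comp_equiv.
Proof.
  intros a a' Ha b b' Hb; rewrite rsf_equiv_sem in Ha, Hb; by_sem.
  setoid_rewrite Ha; setoid_rewrite Hb; reflexivity.
Qed.

Add Parametric Morphism A B C : (@First A B C)
  with signature rsf_equiv ==> rsf_equiv as First_equiv.
Proof.
  intros a a' Ha; rewrite rsf_equiv_sem in Ha; by_sem.
  setoid_rewrite Ha; reflexivity.
Qed.

Lemma arr_ext A B (f g : A -> B) : (forall x, f x = g x) -> Arr f ≡ Arr g.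
Proof. intros H; by_sem; rewrite H; reflexivity. Qed.

Lemma comp_assoc A B C D (a : rsf A B) (b : rsf B C) (c : rsf C D) :
  Comp (Comp a b) c ≡ Comp a (Comp b c).
Proof. by_sem; firstorder eauto. Qed.

Lemma comp_arr A B C (f : A -> B) (g : B -> C) :
  Comp (Arr f) (Arr g) ≡ Arr (fun x => g (f x)).
Proof.
  by_sem; split.
  - intros (? & ? & [-> ->] & [-> ->]); auto.
  - intros [-> ->]; exists (f x), s; auto.
Qed.

Lemma first_arr A B C (f : A -> B) :
  First (C := C) (Arr f) ≡ Arr (fun p => (f (fst p), snd p)).
Proof.
  by_sem; split.
  - intros (? & [-> ->] & ->); auto.
  - intros [-> ->]; eauto.
Qed.

Lemma first_comp A B C D (a : rsf A B) (b : rsf B C) :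
  First (C := D) (Comp a b) ≡ Comp (First a) (First b).
Proof.
  by_sem; split.
  - intros (z & (y0 & s1 & Ha & Hb) & ->); exists (y0, snd x), s1; split; eexists; eauto.
  - intros (q & s1 & (y0 & Ha & ->) & (z & Hb & ->)); simpl in *; eauto 10.
Qed.

Lemma first_get A B C (r : ref B) :
  First (C := C) (Get (A := A) r) ≡ Comp (Get r) (Arr perm).
Proof.
  by_sem; destruct x as [a c]; split.
  - intros ([a0 b] & [Ha Hr] & ->); cbn in *; subst.
    exists (a, c, b), s'; cbn; auto.
  - intros ([p b] & s1 & [Hp Hr] & [-> ->]); cbn in *; subst; exists (a, b); auto.
Qed.

Lemma arr_get A A' B (f : A -> A') (r : ref B) :
  Comp (Arr f) (Get r) ≡ Comp (Get r) (First (Arr f)).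
Proof.
  by_sem; split.
  - intros (x' & s1 & [-> ->] & [Hx Hr]); destruct y as [a b]; cbn in *; subst.
    exists (x, b), s'; cbn; split; [auto | exists (f x); auto].
  - intros ([x' b] & s1 & [Hx Hr] & (z & [-> ->] & ->)); cbn in *; subst.
    exists (f x), s; auto.
Qed.

Lemma first_set A B C (r : ref B) :
  First (C := C) (RSet (A := A) r) ≡ Comp (Arr perm) (RSet r).
Proof.
  by_sem; destruct x as [[a b] c]; split.
  - intros (z & [-> Hw] & ->); exists ((a, c), b), s; cbn; auto.
  - intros (p & s1 & [-> ->] & [-> Hw]); cbn in *; eauto.
Qed.

Lemma set_arr A A' B (f : A -> A') (r : ref B) :
  Comp (RSet r) (Arr f) ≡ Comp (First (Arr f)) (RSet r).
Proof.
  by_sem; destruct x as [a b]; split.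
  - intros (z & s1 & [-> Hw] & [-> ->]); exists (f a, b), s; cbn; split; [exists (f a); auto | auto].
  - intros (p & s1 & (z & [-> ->] & ->) & [-> Hw]); exists a, s'; auto.
Qed.

Lemma arr_id_comp A B (t : rsf A B) : Comp (Arr (fun x => x)) t ≡ t.
Proof.
  by_sem; split.
  - intros (? & ? & [-> ->] & H); exact H.
  - intros H; exists x, s; auto.
Qed.

Lemma comp_arr_id A B (t : rsf A B) : Comp t (Arr (fun y => y)) ≡ t.
Proof.
  by_sem; split.
  - intros (? & ? & H & [-> ->]); exact H.
  - intros H; exists y, s'; auto.
Qed.

Fixpoint pull_inner {A C : Type} (Ds : list Type) : prodR (A * C) Ds -> prodR A Ds * C :=
  match Ds as Ds0 return prodR (A * C) Ds0 -> prodR A Ds0 * C with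
  | [] => fun p => p
  | D :: Ds' => fun p => let q := pull_inner Ds' (fst p) in ((fst q, snd p), snd q)
  end.

Fixpoint push_inner {A C : Type} (Ds : list Type) : prodR A Ds * C -> prodR (A * C) Ds :=
  match Ds as Ds0 return prodR A Ds0 * C -> prodR (A * C) Ds0 with
  | [] => fun p => p
  | D :: Ds' => fun p => (push_inner Ds' (fst (fst p), snd p), snd (fst p))
  end.

Lemma first_pull_inner_perm A C D Ds :
  Comp (First (C := D) (Arr (pull_inner (A := A) (C := C) Ds))) (Arr perm)
  ≡ Arr (pull_inner (D :: Ds)).
Proof.
  rewrite first_arr, comp_arr; apply arr_ext; intros [p d]; cbn.
  destruct (pull_inner Ds p); reflexivity.
Qed.

Lemma perm_first_push_inner A C D Ds :
  Comp (Arr perm) (First (C := D) (Arr (push_inner (A := A) (C := C) Ds)))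
  ≡ Arr (push_inner (D :: Ds)).
Proof. rewrite first_arr, comp_arr; apply arr_ext; intros [[v d] c]; reflexivity. Qed.

(* The wrappers accumulated by [permL_chain] and [perm_r_aux] are iterated [First]s;
   their functoriality up to ≡ is all the inductions below use. *)
Record functorial (F : Type -> Type) (w : forall X Y, rsf X Y -> rsf (F X) (F Y)) : Prop := {
  wrap_proper : forall X Y (a b : rsf X Y), a ≡ b -> w _ _ a ≡ w _ _ b;
  wrap_comp : forall X Y Z (a : rsf X Y) (b : rsf Y Z),
    Comp (w _ _ a) (w _ _ b) ≡ w _ _ (Comp a b);
  wrap_id : forall X, w X X (Arr (fun x => x)) ≡ Arr (fun x => x) }.
Arguments wrap_proper {F w}.
Arguments wrap_comp {F w}.
Arguments wrap_id {F w}.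

Lemma functorial_id : functorial (fun Z => Z) (fun X Y t => t).
Proof. split; intros; [assumption | reflexivity | reflexivity]. Qed.

Lemma functorial_First {F w} D : functorial F w ->
  functorial (fun Z => F (Z * D)%type) (fun X Y t => w _ _ (First (C := D) t)).
Proof.
  intros [Hproper Hcomp Hid]; split.
  - intros X Y a b Hab; apply Hproper; rewrite Hab; reflexivity.
  - intros; rewrite Hcomp; apply Hproper; symmetry; apply first_comp.
  - intros X; rewrite <- Hid; apply Hproper.
    rewrite first_arr; apply arr_ext; intros [x d]; reflexivity.
Qed.

Lemma permL_chain_equiv A C D Ds {F w} : functorial F w ->
  permL_chain A C F w D Ds ≡ w _ _ (Arr (pull_inner (A := A) (C := C) (D :: Ds))).
Proof.
  revert D F w; induction Ds as [|D' Ds IH]; intros D F w Hw; cbn [permL_chain].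
  - apply (wrap_proper Hw), arr_ext; intros [[a c] d]; reflexivity.
  - rewrite (IH D' _ _ (functorial_First D Hw)), (wrap_comp Hw).
    apply (wrap_proper Hw), first_pull_inner_perm.
Qed.

Lemma perm_l_equiv A C Y Ds (u : rsf (prodR A Ds * C) Y) :
  perm_l Ds u ≡ Comp (Arr (pull_inner Ds)) u.
Proof.
  destruct Ds as [|D Ds]; cbn.
  - symmetry; apply arr_id_comp.
  - rewrite (permL_chain_equiv A C D Ds functorial_id); reflexivity.
Qed.

Lemma perm_r_aux_equiv X B C Ds {F w} (acc : rsf X (F (prodR B Ds * C)%type)) :
  functorial F w ->
  perm_r_aux F w Ds acc ≡ Comp acc (w _ _ (Arr (push_inner Ds))).
Proof.
  revert F w acc; induction Ds as [|D Ds IH]; intros F w acc Hw; cbn [perm_r_aux].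
  - cbn [push_inner]; rewrite (wrap_id Hw), comp_arr_id; reflexivity.
  - rewrite (IH _ _ _ (functorial_First D Hw)), comp_assoc, (wrap_comp Hw).
    f_equiv; apply (wrap_proper Hw), perm_first_push_inner.
Qed.

Lemma perm_r_equiv X B C Ds (t : rsf X (prodR B Ds * C)) :
  perm_r Ds t ≡ Comp t (Arr (push_inner Ds)).
Proof. exact (perm_r_aux_equiv X B C Ds t functorial_id). Qed.

Add Parametric Morphism X Y rs : (@seqG_rev X Y rs)
  with signature rsf_equiv ==> rsf_equiv as seqG_rev_equiv.
Proof.
  induction rs as [|r rs IH]; intros t t' H; cbn; [exact H|].
  apply IH; rewrite H; reflexivity.
Qed.

Add Parametric Morphism X Y rs : (@seqS_rev X Y rs)
  with signature rsf_equiv ==> rsf_equiv as seqS_rev_equiv.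
Proof.
  induction rs as [|r rs IH]; intros t t' H; cbn; [exact H|].
  apply IH; rewrite H; reflexivity.
Qed.

Lemma first_seqG_rev X Y C rs (t : rsf (prodR X (tys rs)) Y) :
  First (C := C) (seqG_rev rs t) ≡ seqG_rev rs (Comp (Arr (pull_inner (tys rs))) (First t)).
Proof.
  revert t; induction rs as [|r rs IH]; intros t; cbn [seqG_rev].
  - symmetry; apply arr_id_comp.
  - rewrite IH; apply seqG_rev_equiv.
    rewrite first_comp, first_get.
    rewrite <- (first_pull_inner_perm X C (projT1 r) (tys rs)), !comp_assoc.
    rewrite <- comp_assoc, arr_get, comp_assoc; reflexivity.
Qed.

Lemma first_seqS_rev X Y C rs (t : rsf X (prodR Y (tys rs))) :
  First (C := C) (seqS_rev rs t) ≡ seqS_rev rs (Comp (First t) (Arr (push_inner (tys rs)))).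
Proof.
  revert t; induction rs as [|r rs IH]; intros t; cbn [seqS_rev].
  - symmetry; apply comp_arr_id.
  - rewrite IH; apply seqS_rev_equiv.
    rewrite first_comp, (first_set (prodR Y (tys rs)) _ C (projT2 r)).
    rewrite <- (perm_first_push_inner Y C (projT1 r) (tys rs)), !comp_assoc, set_arr.
    reflexivity.
Qed.

Theorem lemma8 (A B C : Type) (l : list res) :
  (forall t : rsf (prodR A (tys (rev l))) B,
      First (C := C) (seqG_l l t) ≡ seqG_l l (perm_l (tys (rev l)) (First t))) /\
  (forall t : rsf A (prodR B (tys (rev l))),
      First (C := C) (seqS_r l t) ≡ seqS_r l (perm_r (tys (rev l)) (First t))).
Proof.
  unfold seqG_l, seqS_r; split; intros t.
  - rewrite first_seqG_rev, perm_l_equiv; reflexivity.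
  - rewrite first_seqS_rev, perm_r_equiv; reflexivity.
Qed.
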